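(* Let $\Sigma\in\mathbb{R}^{n\times n}$ be positive semidefinite, $\Sigma_\Omega$ a best $k$-sparse approximation of $\Sigma$ and $\Sigma_{\Omega^c}=\Sigma-\Sigma_\Omega$. Let $\eta\in\mathbb{R}^{2m}$ with $\|\eta\|_1\le\epsilon_1$, $y=\mathcal A(\Sigma)+\eta$, and let $\hat\Sigma$ be any minimizer of $\min_M\|M\|_1$ subject to $M\succeq0$, $\|y-\mathcal A(M)\|_1\le\epsilon_1$. If there is an integer $K_2>2k$ with $$\frac{1-\gamma^{\mathrm{lb}}_{k+K_2}}{\sqrt2}-(1+\gamma^{\mathrm{ub}}_{K_2})\sqrt{\frac{k}{K_2}}\ge\beta_2>0,$$ then $$\|\hat\Sigma-\Sigma\|_{\mathrm F}\le\Big(\frac{C_1}{\beta_2}+C_3\Big)\frac{\|\Sigma_{\Omega^c}\|_1}{\sqrt{K_2}}+\frac{C_2}{\beta_2}\cdot\frac{\epsilon_1}{m}$$ for positive constants $C_1,C_2,C_3$ depending only on the RIP-$\ell_2/\ell_1$ constants.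
   Context: Fixed vectors $a_1,\dots,a_{2m}\in\mathbb{R}^n$; $A_i=a_ia_i^\top$; $\mathcal A(M)=(\langle A_i,M\rangle)_{i=1}^{2m}$; $B_i=A_{2i-1}-A_{2i}$; $\mathcal B(X)=(\langle B_i,X\rangle)_{i=1}^m$. $\|M\|_1$ is the entrywise $\ell_1$ norm. A best $k$-sparse approximation keeps the $k$ largest-magnitude entries. RIP-$\ell_2/\ell_1$ constants $\gamma_k^{\mathrm{lb}},\gamma_k^{\mathrm{ub}}$: the smallest numbers such that $(1-\gamma_k^{\mathrm{lb}})\|X\|_{\mathrm F}\le\frac1m\|\mathcal B(X)\|_1\le(1+\gamma_k^{\mathrm{ub}})\|X\|_{\mathrm F}$ for all symmetric $X$ with at most $k$ nonzero entries. *)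

From HB Require Import structures.
From mathcomp Require Import all_boot all_order all_algebra.
Set Implicit Arguments. Unset Strict Implicit. Unset Printing Implicit Defensive.
Import Order.TTheory GRing.Theory Num.Theory.
Local Open Scope ring_scope.

Section Defs.
Variable R : rcfType.

Definition l1mx n (M : 'M[R]_n) : R := \sum_(i < n) \sum_(j < n) `|M i j|.

Definition frob n (M : 'M[R]_n) : R := Num.sqrt (\sum_(i < n) \sum_(j < n) M i j ^+ 2).

Definition mxinner n (A M : 'M[R]_n) : R := \sum_(i < n) \sum_(j < n) A i j * M i j.

(* A_i = a_i a_i^T ; vectors indexed 0..2m-1 (0-based) *)
Definition Amx n (a : nat -> 'cV[R]_n) (i : nat) : 'M[R]_n := a i *m (a i)^T.

(* l1 norm of a vector in R^(2m) given as a sequence (first 2m entries) *)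
Definition l1vec (m : nat) (v : nat -> R) : R := \sum_(i < 2 * m) `|v i|.

Definition resid n m (a : nat -> 'cV[R]_n) (y : nat -> R) (M : 'M[R]_n) : R :=
  l1vec m (fun i => y i - mxinner (Amx a i) M).

(* B_i = A_{2i-1} - A_{2i} (1-based) = A_(2i) - A_(2i+1) (0-based);
   || B(X) ||_1 *)
Definition Bmx n (a : nat -> 'cV[R]_n) (i : nat) : 'M[R]_n :=
  Amx a (2 * i) - Amx a (2 * i).+1.
Definition l1B n m (a : nat -> 'cV[R]_n) (X : 'M[R]_n) : R :=
  \sum_(i < m) `|mxinner (Bmx a i) X|.

Definition symmx n (M : 'M[R]_n) : Prop := M^T = M.

Definition psd n (M : 'M[R]_n) : Prop :=
  symmx M /\ forall x : 'cV[R]_n, 0 <= (x^T *m M *m x) 0 0.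

Definition supp n (M : 'M[R]_n) : {set 'I_n * 'I_n} := [set p | M p.1 p.2 != 0].
Definition ksparse n (k : nat) (M : 'M[R]_n) : Prop := (#|supp M| <= k)%N.

Definition restr n (Om : {set 'I_n * 'I_n}) (M : 'M[R]_n) : 'M[R]_n :=
  \matrix_(i, j) (if (i, j) \in Om then M i j else 0).

(* Om is the support set of a best k-sparse approximation of S:
   it keeps k entries (or all entries if k >= n^2) of largest magnitude. *)
Definition best_ksparse_set n (k : nat) (S : 'M[R]_n) (Om : {set 'I_n * 'I_n}) : Prop :=
  #|Om| = minn k (n * n) /\
  forall p q, p \in Om -> q \notin Om -> `|S q.1 q.2| <= `|S p.1 p.2|.

Definition rip_lb_holds n m (a : nat -> 'cV[R]_n) (k : nat) (g : R) : Prop :=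
  forall X : 'M[R]_n, symmx X -> ksparse k X ->
    (1 - g) * frob X <= l1B m a X / m%:R.
Definition rip_ub_holds n m (a : nat -> 'cV[R]_n) (k : nat) (g : R) : Prop :=
  forall X : 'M[R]_n, symmx X -> ksparse k X ->
    l1B m a X / m%:R <= (1 + g) * frob X.

Definition is_gamma_lb n m (a : nat -> 'cV[R]_n) (k : nat) (g : R) : Prop :=
  rip_lb_holds m a k g /\ forall g', rip_lb_holds m a k g' -> g <= g'.
Definition is_gamma_ub n m (a : nat -> 'cV[R]_n) (k : nat) (g : R) : Prop :=
  rip_ub_holds m a k g /\ forall g', rip_ub_holds m a k g' -> g <= g'.

Definition feasible n m (a : nat -> 'cV[R]_n) (y : nat -> R) (eps : R) (M : 'M[R]_n) : Prop :=
  psd M /\ resid m a y M <= eps.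
Definition is_minimizer n m (a : nat -> 'cV[R]_n) (y : nat -> R) (eps : R) (Mh : 'M[R]_n) : Prop :=
  feasible m a y eps Mh /\ forall M, feasible m a y eps M -> l1mx Mh <= l1mx M.

End Defs.

From HB Require Import structures.
From mathcomp Require Import all_boot all_order all_algebra.
From mathcomp Require Import ring lra zify.
Import Order.TTheory GRing.Theory Num.Theory.
Set Implicit Arguments. Unset Strict Implicit. Unset Printing Implicit Defensive.
Local Open Scope ring_scope.

(* Write H = Sigmah - Sigma for the error and Om for the support of the best
   k-sparse approximation of Sigma.  Minimality of Sigmah gives the cone
   condition  |H_{Om^c}|_1 <= |H_Om|_1 + 2 |Sigma_{Om^c}|_1,  feasibility of
   Sigma and Sigmah gives the tube condition  |B(H)|_1 <= 2 eps1.  The rest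
   is the classical shelling argument, carried out on swap-closed index sets
   so that every block is a symmetric matrix and the RIP applies to it:
   - a greedy selection picks, in a swap-closed set, a swap-closed block of
     at most K largest entries (greedy_block, block_threshold);
   - peeling off such blocks repeatedly, the RIP upper bound controls the
     measurements of a tail by its entry bound and its l1 norm (tail_bound);
   - the head T (Om together with the next largest entries, |T| <= k + K2)
     is controlled by the RIP lower bound (head_tail_split, error_bound);
   - two purely algebraic estimates (head_estimate, tail_estimate) combine
     these inequalities into the stated bound, with
     C1 = 3 (|1 + gub| + 1), C2 = 3 and C3 = 2. *)

Lemma sum_sqr_le (R : rcfType) (I : finType) (A : {set I}) (x : I -> R) :
  (\sum_(p in A) x p) ^+ 2 <= #|A|%:R * \sum_(p in A) x p ^+ 2.
Proof.
set S := \sum_(p in A) x p; set Q := \sum_(p in A) x p ^+ 2.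
have row_sum p : \sum_(q in A) (x p - x q) ^+ 2 = #|A|%:R * x p ^+ 2 + Q - 2 * x p * S.
  have -> : \sum_(q in A) (x p - x q) ^+ 2 =
            \sum_(q in A) (x p ^+ 2 + x q ^+ 2 - 2 * x p * x q).
    by apply: eq_bigr => q _; ring.
  by rewrite sumrB big_split /= sumr_const -/Q /S mulr_sumr -[x p ^+ 2 *+ _]mulr_natl.
have : 0 <= \sum_(p in A) \sum_(q in A) (x p - x q) ^+ 2.
  by apply: sumr_ge0 => p _; apply: sumr_ge0 => q _; apply: sqr_ge0.
rewrite (eq_bigr _ (fun p _ => row_sum p)) sumrB big_split /= -mulr_sumr -/Q.
have -> : \sum_(i in A) 2 * x i * S = 2 * S * S by rewrite -mulr_suml -mulr_sumr.
by rewrite sumr_const -mulr_natl expr2; lra.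
Qed.

Lemma exists_argmax (R : rcfType) (I : finType) (A : {set I}) (f : I -> R) :
  A != set0 -> exists2 q, q \in A & forall p, p \in A -> f p <= f q.
Proof.
case/set0Pn => q0 q0A.
have [|q qA hq] := @real_arg_maxP R I q0 (mem A) f q0A; first by move=> i _; exact: num_real.
by exists q.
Qed.

Lemma sqrtD_le (R : rcfType) (x y : R) : 0 <= x -> 0 <= y ->
  Num.sqrt (x + y) <= Num.sqrt x + Num.sqrt y.
Proof.
move=> x0 y0; have s0 : 0 <= Num.sqrt x + Num.sqrt y by rewrite addr_ge0 ?sqrtr_ge0.
rewrite -(ger0_norm s0) -sqrtr_sqr ler_sqrt ?sqr_ge0 // sqrrD !sqr_sqrtr //.
have : 0 <= Num.sqrt x * Num.sqrt y by rewrite mulr_ge0 ?sqrtr_ge0.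
lra.
Qed.

Lemma sqrt_amgm (R : rcfType) (Q th l r : R) : 0 <= th -> 0 <= l -> 0 < r ->
  Q <= th * l -> Num.sqrt Q <= (th * r + l / r) / 2.
Proof.
move=> th0 l0 r0 hQ; set x := th * r; set y := l / r.
have x0 : 0 <= x by rewrite mulr_ge0 // ltW.
have y0 : 0 <= y by rewrite divr_ge0 // ltW.
have s0 : 0 <= (x + y) / 2 by rewrite divr_ge0 // addr_ge0.
rewrite -(ger0_norm s0) -sqrtr_sqr ler_sqrt ?sqr_ge0 //.
have -> : ((x + y) / 2) ^+ 2 = th * l + ((x - y) / 2) ^+ 2 by rewrite /x /y; field; rewrite gt_eqF.
by have := sqr_ge0 ((x - y) / 2); lra.
Qed.

Section IndexSets.
Variables (R : rcfType) (n : nat).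
Implicit Types (H S : 'M[R]_n) (A B T : {set 'I_n * 'I_n}).

(* Index sets stable under (i, j) |-> (j, i): restricting a symmetric matrix
   to such a set gives a symmetric matrix. *)
Definition swap_closed A := forall p, (swap_pair p \in A) = (p \in A).

Definition l1_on H A := \sum_(p in A) `|H p.1 p.2|.
Definition sq_on H A := \sum_(p in A) H p.1 p.2 ^+ 2.

Lemma disjoint_by A B : (forall p, p \in A -> p \in B -> False) -> [disjoint A & B].
Proof.
move=> h; rewrite disjoints_subset; apply/subsetP => p pA; rewrite inE.
by apply/negP => pB; exact: h p pA pB.
Qed.

Lemma l1mx_restr H A : l1mx (restr A H) = l1_on H A.
Proof.
rewrite /l1mx pair_bigA /= /l1_on [in RHS]big_mkcond /=.
by apply: eq_bigr => -[i j] _ /=; rewrite mxE; case: ifP; rewrite ?normr0.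
Qed.

Lemma frob_restr H A : frob (restr A H) = Num.sqrt (sq_on H A).
Proof.
rewrite /frob pair_bigA /= /sq_on [in RHS]big_mkcond /=; congr Num.sqrt.
by apply: eq_bigr => -[i j] _ /=; rewrite mxE; case: ifP; rewrite ?expr0n.
Qed.

Lemma l1mx_l1_on H : l1mx H = l1_on H setT.
Proof. by rewrite /l1mx pair_bigA /l1_on; apply: eq_bigl => p; rewrite in_setT. Qed.

Lemma frob_sq_on H : frob H = Num.sqrt (sq_on H setT).
Proof. by rewrite /frob pair_bigA /sq_on; congr Num.sqrt; apply: eq_bigl => p; rewrite in_setT. Qed.

Lemma restrU H A B : [disjoint A & B] -> restr (A :|: B) H = restr A H + restr B H.
Proof.
move=> dAB; apply/matrixP => i j; rewrite !mxE in_setU.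
case hA: ((i, j) \in A); case hB: ((i, j) \in B); rewrite ?addr0 ?add0r //.
by move: dAB => /disjointFr /(_ hA); rewrite hB.
Qed.

Lemma restr0 H : restr set0 H = 0.
Proof. by apply/matrixP => i j; rewrite !mxE in_set0. Qed.

Lemma restrC H A : H - restr A H = restr (~: A) H.
Proof.
apply/matrixP => i j; rewrite !mxE inE.
by case: ((i, j) \in A); rewrite ?subrr ?subr0.
Qed.

Lemma l1_onU H A B : [disjoint A & B] -> l1_on H (A :|: B) = l1_on H A + l1_on H B.
Proof. by move=> d; rewrite /l1_on -bigU //; apply: eq_bigl => p; rewrite !inE. Qed.

Lemma sq_onU H A B : [disjoint A & B] -> sq_on H (A :|: B) = sq_on H A + sq_on H B.
Proof. by move=> d; rewrite /sq_on -bigU //; apply: eq_bigl => p; rewrite !inE. Qed.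

Lemma l1_on_ge0 H A : 0 <= l1_on H A.
Proof. by apply: sumr_ge0 => p _. Qed.

Lemma sq_on_ge0 H A : 0 <= sq_on H A.
Proof. by apply: sumr_ge0 => p _; exact: sqr_ge0. Qed.

Lemma setD_split A B : A \subset B -> B = A :|: (B :\: A) /\ [disjoint A & B :\: A].
Proof.
move=> sAB; split; first by rewrite -{1}(setID B A) (setIidPr sAB).
by apply: disjoint_by => p pA; rewrite inE pA.
Qed.

Lemma l1_on_sub H A B : A \subset B -> l1_on H A <= l1_on H B.
Proof.
by case/setD_split=> eB d; rewrite eB l1_onU // lerDl l1_on_ge0.
Qed.

Lemma sq_on_sub H A B : A \subset B -> sq_on H A <= sq_on H B.
Proof.
by case/setD_split=> eB d; rewrite eB sq_onU // lerDl sq_on_ge0.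
Qed.

Lemma l1_onC H A : l1_on H setT = l1_on H A + l1_on H (~: A).
Proof. by rewrite -(setUCr A) l1_onU //; apply: disjoint_by => p; rewrite inE => ->. Qed.

Lemma swap_closedC A : swap_closed A -> swap_closed (~: A).
Proof. by move=> sA p; rewrite !inE sA. Qed.

Lemma swap_closedU A B : swap_closed A -> swap_closed B -> swap_closed (A :|: B).
Proof. by move=> sA sB p; rewrite !inE sA sB. Qed.

Lemma restr_sym H A : symmx H -> swap_closed A -> symmx (restr A H).
Proof.
move=> sH sA; apply/matrixP => i j; rewrite !mxE.
have := sA (i, j); rewrite /swap_pair /= => ->.
by case: ifP => // _; rewrite -{1}sH mxE.
Qed.

Lemma restr_sparse H A k : (#|A| <= k)%N -> ksparse k (restr A H).
Proof.
move=> hA; apply: leq_trans hA; apply: subset_leq_card.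
by apply/subsetP => -[i j]; rewrite inE mxE /=; case: ifP => // _; rewrite eqxx.
Qed.

Lemma symmxB H S : symmx H -> symmx S -> symmx (H - S).
Proof. by move=> sH sS; apply/matrixP => i j; rewrite !mxE -{1}sH -{1}sS !mxE. Qed.

Lemma sym_swap H p : symmx H -> H (swap_pair p).1 (swap_pair p).2 = H p.1 p.2.
Proof. by move=> sH; case: p => i j /=; rewrite -{1}sH mxE. Qed.

Lemma sq_on_le H A th : (forall p, p \in A -> `|H p.1 p.2| <= th) ->
  sq_on H A <= th * l1_on H A.
Proof.
move=> h; rewrite /sq_on /l1_on mulr_sumr; apply: ler_sum => p pA.
by rewrite -real_normK ?num_real // expr2 ler_wpM2r ?normr_ge0 ?h.
Qed.

Lemma l1_on_sqr H A : l1_on H A ^+ 2 <= #|A|%:R * sq_on H A.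
Proof.
apply: le_trans (sum_sqr_le A (fun p => `|H p.1 p.2|)) _.
by rewrite le_eqVlt (eq_bigr _ (fun p _ => real_normK (num_real (H p.1 p.2)))) eqxx.
Qed.

Lemma l1_on_le_frob H A B k : A \subset B -> (#|A| <= k)%N ->
  l1_on H A <= Num.sqrt k%:R * Num.sqrt (sq_on H B).
Proof.
move=> sAB cardA; rewrite -sqrtrM ?ler0n // -(ger0_norm (l1_on_ge0 H A)) -sqrtr_sqr.
rewrite ler_sqrt ?mulr_ge0 ?ler0n ?sq_on_ge0 //.
apply: le_trans (l1_on_sqr H A) _.
by apply: ler_pM; rewrite ?ler0n ?sq_on_ge0 ?ler_nat ?sq_on_sub.
Qed.

Lemma frob_le_l1mx H : frob H <= l1mx H.
Proof.
rewrite frob_sq_on l1mx_l1_on.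
have h : sq_on H setT <= l1_on H setT ^+ 2.
  rewrite expr2; apply: sq_on_le => p pA.
  by rewrite /l1_on (bigD1 p) //= lerDl sumr_ge0.
by rewrite -(ger0_norm (l1_on_ge0 H setT)) -sqrtr_sqr ler_sqrt // sqr_ge0.
Qed.

End IndexSets.

Section Measurements.
Variables (R : rcfType) (n m : nat) (a : nat -> 'cV[R]_n).
Implicit Types (B X Y : 'M[R]_n).

Lemma mxinnerD B X Y : mxinner B (X + Y) = mxinner B X + mxinner B Y.
Proof.
rewrite /mxinner -big_split; apply: eq_bigr => i _; rewrite -big_split.
by apply: eq_bigr => j _; rewrite mxE mulrDr.
Qed.

Lemma mxinnerBr B X Y : mxinner B (X - Y) = mxinner B X - mxinner B Y.
Proof.
rewrite /mxinner -sumrB; apply: eq_bigr => i _; rewrite -sumrB.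
by apply: eq_bigr => j _; rewrite !mxE mulrBr.
Qed.

Lemma mxinnerBl B Y X : mxinner (B - Y) X = mxinner B X - mxinner Y X.
Proof.
rewrite /mxinner -sumrB; apply: eq_bigr => i _; rewrite -sumrB.
by apply: eq_bigr => j _; rewrite !mxE mulrBl.
Qed.

Lemma l1B_ge0 X : 0 <= l1B m a X.
Proof. by apply: sumr_ge0 => i _. Qed.

Lemma l1B_0 : l1B m a 0 = 0.
Proof.
rewrite /l1B big1 // => i _.
by rewrite /mxinner big1 ?normr0 // => j _; rewrite big1 // => l _;
  rewrite [(0 : 'M_n) j l]mxE mulr0.
Qed.

Lemma l1BD X Y : l1B m a (X + Y) <= l1B m a X + l1B m a Y.
Proof.
by rewrite /l1B -big_split; apply: ler_sum => i _; rewrite mxinnerD ler_normD.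
Qed.

Lemma l1BB X Y : l1B m a (X - Y) <= l1B m a X + l1B m a Y.
Proof.
by rewrite /l1B -big_split; apply: ler_sum => i _; rewrite mxinnerBr ler_normB.
Qed.

Lemma sum_pairs (F : nat -> R) :
  \sum_(i < m) (F (2 * i)%N + F (2 * i).+1) = \sum_(j < 2 * m) F j.
Proof.
elim: m => [|m' IH]; first by rewrite !big_ord0.
rewrite big_ord_recr IH /= (_ : (2 * m'.+1 = (2 * m').+2)%N); last by lia.
by rewrite !big_ord_recr /= addrA.
Qed.

End Measurements.

(* The RIP upper constant of any positive order satisfies 1 + g >= 0: test
   it on the symmetric 1-sparse matrix with a single entry 1. *)
Lemma rip_ub_nonneg (R : rcfType) n m (a : nat -> 'cV[R]_n) K g :
  (0 < n)%N -> (0 < K)%N -> rip_ub_holds m a K g -> 0 <= 1 + g.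
Proof.
case: n a => // n' a' _ K0 hub.
pose E := restr [set (@ord0 n', @ord0 n')] (const_mx 1 : 'M[R]_n'.+1).
have sE : symmx E.
  apply: restr_sym; first by apply/matrixP => i j; rewrite !mxE.
  by move=> -[i j]; rewrite !inE /swap_pair !xpair_eqE andbC.
have := hub E sE (restr_sparse _ (_ : (#|[set (ord0, ord0)]| <= K)%N)).
rewrite cards1 frob_restr /sq_on big_set1 mxE expr1n sqrtr1 mulr1 => /(_ K0).
apply: le_trans; rewrite divr_ge0 ?ler0n //; exact: l1B_ge0.
Qed.

Section Greedy.
Variables (R : rcfType) (n : nat) (H : 'M[R]_n).
Hypothesis symH : symmx H.
Implicit Types (A T : {set 'I_n * 'I_n}).

Definition dominates T A :=
  forall p q, p \in T -> q \in A :\: T -> `|H q.1 q.2| <= `|H p.1 p.2|.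

(* Greedy selection: a swap-closed set A contains a swap-closed block T of
   at most c largest entries, which is all of A or has at least c - 1
   elements (entries are added in symmetric pairs). *)
Lemma greedy_block A c : swap_closed A -> exists T,
  [/\ T \subset A, swap_closed T, (#|T| <= c)%N, dominates T A &
      T = A \/ (c <= #|T|.+1)%N].
Proof.
move=> symA; elim: c => [|c [T [sTA symT cT domT fullT]]].
  exists set0; split; rewrite ?sub0set ?cards0 //; last by right.
    by move=> p; rewrite !inE.
  by move=> p q; rewrite inE.
have [eTA|neTA] := eqVneq T A; first by exists T; split => //; [exact: leqW | left].
have [le_cT|lt_Tc] := leqP c #|T|; first by exists T; split => //; [exact: leqW | right].
have cardT : #|T|.+1 = c by case: fullT => [eTA|]; [rewrite eTA eqxx in neTA | lia].
have neD : A :\: T != set0.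
  by apply: contraNneq neTA => eD; rewrite eqEsubset sTA -setD_eq0 eD eqxx.
have [q qD qmax] := exists_argmax (fun p => `|H p.1 p.2|) neD.
move: (qD); rewrite inE => /andP[qT qA].
exists (T :|: [set q; swap_pair q]); split.
- by rewrite subUset sTA subUset !sub1set qA symA.
- apply: swap_closedU => // p; rewrite !inE -{1}(swap_pairK q).
  by rewrite !(inj_eq (can_inj swap_pairK)) orbC.
- apply: leq_trans (leq_card_setU _ _).1 _; rewrite cards2.
  by case: (q != swap_pair q); rewrite /= -cardT ?addn2 ?addn1.
- move=> p r; rewrite !inE => /orP[pT|/orP[/eqP->|/eqP->]] /andP[];
    rewrite negb_or => /andP[rT _] rA.
  + by apply: domT pT _; rewrite inE rT rA.
  + by apply: qmax; rewrite inE rT rA.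
  + by rewrite sym_swap //; apply: qmax; rewrite inE rT rA.
- right; rewrite -cardT ltnS.
  apply: leq_trans (subset_leq_card (_ : q |: T \subset _)); first by rewrite cardsU1 qT.
  by rewrite subUset sub1set !inE eqxx orbT subsetUl.
Qed.

Lemma block_threshold T A N : T \subset A -> dominates T A ->
  T = A \/ (N <= #|T|)%N ->
  exists th, [/\ 0 <= th, (forall p, p \in A :\: T -> `|H p.1 p.2| <= th) &
                 th * N%:R <= l1_on H T].
Proof.
move=> sTA domT fullT.
have [eD|neD] := eqVneq (A :\: T) set0.
  by exists 0; split; rewrite ?mul0r ?l1_on_ge0 // => p; rewrite eD inE.
have [q qD qmax] := exists_argmax (fun p => `|H p.1 p.2|) neD.
exists `|H q.1 q.2|; split => //.
have NT : (N <= #|T|)%N by case: fullT => // eT; rewrite eT setDv eqxx in neD.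
apply: le_trans (_ : `|H q.1 q.2| *+ #|T| <= _).
  by rewrite -[_ *+ #|T|]mulr_natr ler_wpM2l // ler_nat.
by rewrite -sumr_const /l1_on; apply: ler_sum => p pT; exact: domT.
Qed.

End Greedy.

Section Shelling.
Variables (R : rcfType) (n m K : nat) (a : nat -> 'cV[R]_n) (gub : R).
Hypothesis gub_ge : 0 <= 1 + gub.
Hypothesis K_ge2 : (2 <= K)%N.
Hypothesis rip_ub : rip_ub_holds m a K gub.

(* The scale at which consecutive blocks of size K are compared. *)
Let r : R := Num.sqrt (K.-1)%:R.

Lemma r_gt0 : 0 < r.
Proof. by rewrite sqrtr_gt0 ltr0n; case: K K_ge2 => // -[]. Qed.

(* Tail bound: if H is symmetric and its entries on a swap-closed set A are
   bounded by th, peeling off greedy blocks of size K and applying the RIP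
   upper bound to each yields
     |B(H_A)|_1 / m <= (1 + gub) (th r / 2 + |H_A|_1 / r).
   The AM-GM step trades the Frobenius norm of a block for its entry bound
   and the l1 norm of the block, whose threshold controls the next block. *)
Lemma tail_bound (H : 'M[R]_n) (A : {set 'I_n * 'I_n}) (th : R) :
  symmx H -> swap_closed A -> 0 <= th -> (forall p, p \in A -> `|H p.1 p.2| <= th) ->
  l1B m a (restr A H) / m%:R <= (1 + gub) * (th * r / 2 + l1_on H A / r).
Proof.
move=> symH; have r0 := r_gt0.
elim: {A}#|A|.+1 {-2}A (ltnSn #|A|) th => // c IH A cardA th symA th0 hth.
have [->|neA] := eqVneq A set0.
  rewrite restr0 l1B_0 mul0r mulr_ge0 // addr_ge0 ?divr_ge0 ?mulr_ge0 ?l1_on_ge0 //;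
    exact: ltW.
have [T [sTA symT cardT domT fullT]] := greedy_block symH K symA.
have [eA disj] := setD_split sTA.
have fullT' : T = A \/ (K.-1 <= #|T|)%N by case: fullT; [left | right; lia].
have [th' [th'0 hth' bth']] := block_threshold sTA domT fullT'.
have T0 : (0 < #|T|)%N by case: fullT => [->|]; [rewrite card_gt0 | lia].
have symD : swap_closed (A :\: T) by move=> p; rewrite !inE symT symA.
have cardD : (#|A :\: T| < c)%N.
  by rewrite (cardsDS sTA); have := subset_leq_card sTA; lia.
have IHD := IH _ cardD th' symD th'0 hth'.
have ripT := rip_ub (restr_sym symH symT) (restr_sparse H cardT).
rewrite frob_restr in ripT.
have amgm : Num.sqrt (sq_on H T) <= (th * r + l1_on H T / r) / 2.
  apply: sqrt_amgm; rewrite ?l1_on_ge0 //.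
  by apply: sq_on_le => p pT; apply: hth; exact: (subsetP sTA).
have next : th' * r / 2 <= l1_on H T / r / 2.
  rewrite ler_pM2r ?invr_gt0 ?ltr0n // ler_pdivlMr // -mulrA -expr2.
  by rewrite sqr_sqrtr ?ler0n.
rewrite eA restrU // l1_onU //.
apply: le_trans (_ : (l1B m a (restr T H) + l1B m a (restr (A :\: T) H)) / m%:R <= _).
  by rewrite ler_wpM2r ?invr_ge0 ?ler0n // l1BD.
rewrite mulrDl; apply: le_trans (lerD ripT IHD) _.
rewrite -mulrDr ler_wpM2l // mulrDl; lra.
Qed.

End Shelling.

(* The head
   is Om, its transpose, and a greedy block of the largest remaining entries. *)
Lemma head_tail_split (R : rcfType) n (H : 'M[R]_n) (Om : {set 'I_n * 'I_n}) k K :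
  symmx H -> (#|Om| <= k)%N -> (2 * k < K)%N ->
  exists2 T, [/\ swap_closed T, Om \subset T & (#|T| <= k + K)%N] &
    exists th, [/\ 0 <= th, (forall p, p \in ~: T -> `|H p.1 p.2| <= th) &
                   th * (K.-1)%:R <= 2 * l1_on H (T :\: Om)].
Proof.
move=> symH cardOm hkK.
set T0 := Om :|: swap_pair @^-1: Om.
have symT0 : swap_closed T0 by move=> p; rewrite !inE swap_pairK orbC.
have cardT0 : (#|T0| <= 2 * k)%N.
  apply: leq_trans (leq_card_setU _ _).1 _.
  by rewrite card_preimset; [lia | exact: (can_inj swap_pairK)].
set c := (k + K - #|T0|)%N.
have [T1 [sT1 symT1 cardT1 domT1 fullT1]] := greedy_block symH c (swap_closedC symT0).
have fullT1' : T1 = ~: T0 \/ (c.-1 <= #|T1|)%N by case: fullT1; [left | right; lia].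
have [th [th0 hth bth]] := block_threshold sT1 domT1 fullT1'.
exists (T0 :|: T1); first split.
- exact: swap_closedU.
- exact: subset_trans (subsetUl _ _) (subsetUl _ _).
- by apply: leq_trans (leq_card_setU _ _).1 _; lia.
exists th; split => //.
  by move=> p; rewrite !inE negb_or => /andP[pT0 pT1]; apply: hth; rewrite !inE pT0 pT1.
have sT1D : T1 \subset (T0 :|: T1) :\: Om.
  apply/subsetP => p pT1; have := subsetP sT1 p pT1.
  by rewrite !inE pT1 orbT andbT negb_or => /andP[].
apply: le_trans (_ : th * (2 * c.-1)%:R <= _).
  by rewrite ler_wpM2l // ler_nat; lia.
rewrite natrM mulrCA ler_pM2l ?ltr0n //.
by apply: le_trans bth (l1_on_sub H sT1D).
Qed.

Section Estimates.
Variable R : rcfType.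

(* Read  F = |H_T|_F,  l1 = |H_{T \ Om}|_1,  lR = |H_{T^c}|_1,
   h = 1 - glb,  g = 1 + gub,  s = sqrt 2,  r = sqrt (K - 1),  sK = sqrt K,
   sk = sqrt k,  w = s sqrt (k / K): the RIP lower bound on the head, the
   tail bound, the threshold and the cone condition give
     beta F <= 2 e + 2 g t / sqrt K. *)
Lemma head_estimate (g h be s w F e t l1 lR th r sK sk : R) :
  0 <= g -> s ^+ 2 = 2 -> 0 < s -> 0 <= F -> 0 <= e -> 0 <= t -> 0 < r -> 0 < sK ->
  be * s + g * w <= h ->
  h * F <= 2 * e + g * (th * r / 2 + lR / r) ->
  th * r ^+ 2 <= 2 * l1 ->
  l1 + lR <= sk * F + 2 * t ->
  sk <= w * r -> sK <= s * r ->
  be * F <= 2 * e + 2 * g * (t / sK).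
Proof.
move=> g0 s22 s0 F0 e0 t0 r0 sK0 hb hF hth hL hsk hsK.
have rr : r * r^-1 = 1 by rewrite mulfV // gt_eqF.
have ir0 : 0 < r^-1 by rewrite invr_gt0.
have thr : th * r / 2 <= l1 * r^-1.
  have := ler_wpM2r (ltW ir0) hth.
  by rewrite expr2 -!mulrA rr mulr1 mulrA; lra.
have skr : sk * r^-1 <= w by have := ler_wpM2r (ltW ir0) hsk; rewrite -mulrA rr mulr1.
have tr : t * r^-1 <= s * (t / sK).
  have iK0 : 0 <= sK^-1 by rewrite invr_ge0 ltW.
  have := ler_wpM2r (mulr_ge0 (mulr_ge0 t0 (ltW ir0)) iK0) hsK.
  have -> : sK * (t * r^-1 * sK^-1) = t * r^-1 by field; rewrite !gt_eqF.
  by have -> : s * r * (t * r^-1 * sK^-1) = s * (t / sK) by field; rewrite !gt_eqF.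
have tail : g * (th * r / 2 + lR / r) <= g * w * F + 2 * g * (t * r^-1).
  have h1 : g * (th * r / 2 + lR / r) <= g * ((l1 + lR) * r^-1).
    by rewrite ler_wpM2l // mulrDl lerD2r.
  have h2 : (l1 + lR) * r^-1 <= sk * r^-1 * F + 2 * (t * r^-1).
    apply: le_trans (ler_wpM2r (ltW ir0) hL) _.
    by rewrite le_eqVlt; apply/orP; left; apply/eqP; ring.
  have h3 : sk * r^-1 * F <= w * F := ler_wpM2r F0 skr.
  have := ler_wpM2l g0 (le_trans h2 (lerD h3 (lexx _))).
  rewrite mulrDr; lra.
have hbF := ler_wpM2r F0 hb.
have s2 : s <= 2.
  by rewrite -(ler_pXn2r (_ : 0 < 2)%N) ?nnegrE ?s22 ?ltW //; lra.
have trs := ler_wpM2l (mulr_ge0 g0 (ler0n _ 2)) tr.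
have : s * (be * F) <= s * (s * e + 2 * g * (t / sK)).
  have -> : s * (s * e + 2 * g * (t / sK)) = s ^+ 2 * e + 2 * g * (s * (t / sK)) by ring.
  rewrite s22 mulrDl; lra.
rewrite ler_pM2l // => /le_trans; apply.
by rewrite lerD2r ler_wpM2r.
Qed.

(* Tail estimate: with FR = |H_{T^c}|_F, the entry bound FR^2 <= th lR, the
   threshold and the cone condition give  FR <= F / 2 + 2 t / sqrt K. *)
Lemma tail_estimate (s F FR t l1 lR th r sK sk : R) :
  s ^+ 2 = 2 -> 0 < s -> 0 <= F -> 0 <= FR -> 0 <= t -> 0 <= l1 -> 0 <= lR ->
  0 <= th -> 0 < r -> 0 < sK ->
  FR ^+ 2 <= th * lR -> th * r ^+ 2 <= 2 * l1 ->
  l1 + lR <= sk * F + 2 * t -> s * sk <= r -> sK <= s * r ->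
  FR <= F / 2 + 2 * (t / sK).
Proof.
move=> s22 s0 F0 FR0 t0 l10 lR0 th0 r0 sK0 hFR hth hL hsk hsK.
have sr0 : 0 < s * r by rewrite mulr_gt0.
have srFR : s * r * FR <= l1 + lR.
  have nn1 : s * r * FR \in Num.nneg by rewrite nnegrE mulr_ge0 // ltW.
  have nn2 : l1 + lR \in Num.nneg by rewrite nnegrE addr_ge0.
  rewrite -(ler_sqr nn1 nn2).
  have h1 := ler_wpM2l (sqr_ge0 r) hFR.
  have h2 := ler_wpM2r lR0 hth.
  have h3 := sqr_ge0 (l1 - lR).
  rewrite !exprMn s22 sqrrD; rewrite sqrrB in h3.
  rewrite (_ : r ^+ 2 * (th * lR) = th * r ^+ 2 * lR) in h1; last by ring.
  lra.
have skF : sk * F <= s * r * (F / 2).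
  have : 2 * sk <= s * r by rewrite -s22 expr2 -mulrA ler_wpM2l // ltW.
  by move/(ler_wpM2r F0); lra.
have tK : t <= s * r * (t / sK).
  have := ler_wpM2r (divr_ge0 t0 (ltW sK0)) hsK.
  by rewrite mulrCA divff ?gt_eqF // mulr1.
rewrite -(ler_pM2l sr0) mulrDr; lra.
Qed.

Lemma combine_estimates (g be F FR e u : R) : 0 < be -> 0 <= u ->
  be * F <= 2 * e + 2 * g * u -> FR <= F / 2 + 2 * u ->
  F + FR <= (3 * (`|g| + 1) / be + 2) * u + 3 / be * e.
Proof.
move=> be0 u0 hF hFR; have ib0 : 0 < be^-1 by rewrite invr_gt0.
have := ler_wpM2r (ltW ib0) hF; rewrite mulrAC divff ?gt_eqF // mul1r => F_le.
have : 3 * g * be^-1 * u <= 3 * (`|g| + 1) * be^-1 * u.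
  by rewrite ler_wpM2r // ler_wpM2r ?(ltW ib0) // ler_wpM2l // ler_wpDr // real_ler_norm ?num_real.
rewrite mulrDl; move: F_le; rewrite mulrDl; lra.
Qed.

End Estimates.

Lemma sqrt_sparsity_facts (R : rcfType) (k K : nat) : (2 * k < K)%N -> (2 <= K)%N ->
  [/\ Num.sqrt (k%:R : R) <= Num.sqrt 2 * Num.sqrt (k%:R / K%:R) * Num.sqrt (K.-1)%:R,
      Num.sqrt (K%:R : R) <= Num.sqrt 2 * Num.sqrt (K.-1)%:R &
      Num.sqrt 2 * Num.sqrt (k%:R : R) <= Num.sqrt (K.-1)%:R].
Proof.
move=> hkK K2; have K0 : 0 < (K%:R : R) by rewrite ltr0n; lia.
have iK0 : 0 <= (K%:R : R)^-1 by rewrite invr_ge0 ltW.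
split; rewrite -!sqrtrM ?mulr_ge0 ?ler0n // ler_sqrt ?mulr_ge0 ?ler0n //.
- have -> : 2 * (k%:R / K%:R) * (K.-1)%:R = (2 * k * K.-1)%:R / (K%:R : R).
    by rewrite !natrM; ring.
  rewrite ler_pdivlMr // -natrM ler_nat mulnAC (mulnC k) leq_mul2r.
  by apply/orP; right; lia.
- by rewrite -natrM ler_nat; lia.
- by rewrite -natrM ler_nat; lia.
Qed.

Section ErrorBound.
Variables (R : rcfType) (n m : nat) (a : nat -> 'cV[R]_n) (k K : nat) (glb gub beta : R).
Hypothesis rip_lb : rip_lb_holds m a (k + K) glb.
Hypothesis rip_ub : rip_ub_holds m a K gub.
Hypothesis hkK : (2 * k < K)%N.
Hypothesis beta_gt0 : 0 < beta.
Hypothesis beta_le : beta <= (1 - glb) / Num.sqrt 2 - (1 + gub) * Num.sqrt (k%:R / K%:R).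

Definition error_rhs (t e : R) : R :=
  (3 * (`|1 + gub| + 1) / beta + 2) * (t / Num.sqrt K%:R) + 3 / beta * e.

(* The bound dominates 2 t / sqrt K, which settles the degenerate cases. *)
Lemma error_rhs_ge (t e : R) : 0 <= t -> 0 <= e -> 2 * (t / Num.sqrt K%:R) <= error_rhs t e.
Proof.
move=> t0 e0; have u0 : 0 <= t / Num.sqrt K%:R by rewrite divr_ge0 ?sqrtr_ge0.
have c0 : 0 <= 3 * (`|1 + gub| + 1) / beta.
  by apply: divr_ge0; [rewrite mulr_ge0 // addr_ge0 | exact: ltW].
have := mulr_ge0 c0 u0; have : 0 <= 3 / beta * e by rewrite mulr_ge0 // divr_ge0 ?ltW.
rewrite /error_rhs mulrDl; lra.
Qed.

Lemma error_bound_main (H : 'M[R]_n) (Om : {set 'I_n * 'I_n}) (t e : R) :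
  (0 < n)%N -> (2 <= K)%N ->
  symmx H -> (#|Om| <= k)%N -> 0 <= t -> 0 <= e ->
  l1_on H (~: Om) <= l1_on H Om + 2 * t -> l1B m a H / m%:R <= 2 * e ->
  frob H <= error_rhs t e.
Proof.
move=> n0 K2 symH cardOm t0 e0 cone tube.
have g0 : 0 <= 1 + gub by apply: rip_ub_nonneg n0 _ rip_ub; lia.
have [T [symT sOmT cardT] [th [th0 hth bth]]] := head_tail_split symH cardOm hkK.
set r : R := Num.sqrt (K.-1)%:R; set s : R := Num.sqrt 2.
set F := Num.sqrt (sq_on H T); set FR := Num.sqrt (sq_on H (~: T)).
have r0 : 0 < r by rewrite sqrtr_gt0 ltr0n ltn_predRL.
have s0 : 0 < s by rewrite sqrtr_gt0.
have s22 : s ^+ 2 = 2 by rewrite sqr_sqrtr.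
have sK0 : 0 < Num.sqrt (K%:R : R) by rewrite sqrtr_gt0 ltr0n ltnW.
have [hsk hsK hs2] := sqrt_sparsity_facts R hkK K2.
have bth' : th * r ^+ 2 <= 2 * l1_on H (T :\: Om) by rewrite sqr_sqrtr ?ler0n.
(* RIP lower bound on the head, tube condition and tail bound. *)
have head : (1 - glb) * F <= 2 * e + (1 + gub) * (th * r / 2 + l1_on H (~: T) / r).
  have := rip_lb (restr_sym symH symT) (restr_sparse H cardT).
  rewrite frob_restr => /le_trans; apply.
  rewrite -{1}(setCK T) -restrC.
  apply: le_trans (_ : (l1B m a H + l1B m a (restr (~: T) H)) / m%:R <= _).
    by rewrite ler_wpM2r ?invr_ge0 ?ler0n // l1BB.
  by rewrite mulrDl lerD //; apply: tail_bound => //; exact: swap_closedC.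
(* Cone condition and Cauchy-Schwarz on Om. *)
have split_cone : l1_on H (T :\: Om) + l1_on H (~: T) <= Num.sqrt k%:R * F + 2 * t.
  rewrite -l1_onU; last by apply: disjoint_by => p; rewrite !inE => /andP[_ ->].
  apply: le_trans (l1_on_sub _ (_ : _ \subset ~: Om)) _.
    by apply/subsetP => p; rewrite !inE => /orP[/andP[] //|]; apply: contra => /(subsetP sOmT).
  apply: le_trans cone _; rewrite lerD2r.
  exact: l1_on_le_frob sOmT cardOm.
have tail : FR ^+ 2 <= th * l1_on H (~: T) by rewrite sqr_sqrtr ?sq_on_ge0 // sq_on_le.
have frob_split : frob H <= F + FR.
  rewrite frob_sq_on -(setUCr T) sq_onU; last by apply: disjoint_by => p; rewrite inE => ->.
  by apply: sqrtD_le; exact: sq_on_ge0.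
have hb : beta * s + (1 + gub) * (s * Num.sqrt (k%:R / K%:R)) <= 1 - glb.
  have := ler_wpM2r (ltW s0) beta_le; rewrite mulrBl divfK ?gt_eqF //; lra.
rewrite /error_rhs; apply: le_trans frob_split (combine_estimates beta_gt0 _ _ _).
- exact: divr_ge0 t0 (ltW sK0).
- by apply: head_estimate g0 s22 s0 _ e0 t0 r0 sK0 hb head bth' split_cone _ hsK;
    rewrite ?sqrtr_ge0 // mulrA.
- by apply: tail_estimate s22 s0 _ _ t0 _ _ th0 r0 sK0 tail bth' split_cone hs2 hsK;
    rewrite ?sqrtr_ge0 ?l1_on_ge0.
Qed.

(* Robust null-space property.  The degenerate cases are direct: for n = 0
   there are no entries, and for K = 1 we have k = 0, Om = set0, and the cone
   condition alone bounds |H|_F <= |H|_1 <= 2 t. *)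
Lemma error_bound (H : 'M[R]_n) (Om : {set 'I_n * 'I_n}) (t e : R) :
  symmx H -> (#|Om| <= k)%N -> 0 <= t -> 0 <= e ->
  l1_on H (~: Om) <= l1_on H Om + 2 * t -> l1B m a H / m%:R <= 2 * e ->
  frob H <= error_rhs t e.
Proof.
move=> symH cardOm t0 e0 cone tube.
have [n0|n_gt0] := posnP n.
  rewrite frob_sq_on /sq_on big1 ?sqrtr0 => [|[[i hi] j] _]; last by lia.
  by apply: le_trans (error_rhs_ge t0 e0); rewrite mulr_ge0 ?divr_ge0 ?sqrtr_ge0.
have [K1|K2] := leqP K 1; last exact: error_bound_main n_gt0 K2 symH cardOm t0 e0 cone tube.
have Om0 : Om = set0 by apply: cards0_eq; lia.
apply: le_trans (frob_le_l1mx H) (le_trans _ (error_rhs_ge t0 e0)).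
move: cone; rewrite Om0 setC0 l1mx_l1_on /l1_on big_set0 add0r.
by rewrite (_ : K = 1%N) ?sqrtr1 ?divr1 //; lia.
Qed.

End ErrorBound.

Section Minimizer.
Variables (R : rcfType) (n m : nat) (a : nat -> 'cV[R]_n).
Implicit Types (S Sh : 'M[R]_n) (eta : nat -> R).

Lemma l1vec_ge0 (v : nat -> R) : 0 <= l1vec m v.
Proof. by apply: sumr_ge0 => i _. Qed.

Lemma truth_feasible S eta eps : psd S -> l1vec m eta <= eps ->
  feasible m a (fun i => mxinner (Amx a i) S + eta i) eps S.
Proof.
move=> psdS heta; split => //; apply: le_trans heta.
rewrite /resid /l1vec le_eqVlt; apply/orP; left; apply/eqP.
by apply: eq_bigr => i _; congr `|_|; ring.
Qed.

Lemma minimizer_cone S Sh (Om : {set 'I_n * 'I_n}) : l1mx Sh <= l1mx S ->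
  l1_on (Sh - S) (~: Om) <= l1_on (Sh - S) Om + 2 * l1mx (S - restr Om S).
Proof.
rewrite (l1mx_l1_on Sh) (l1mx_l1_on S) !(l1_onC _ Om) restrC l1mx_restr => hmin.
have onOm : l1_on S Om <= l1_on Sh Om + l1_on (Sh - S) Om.
  rewrite /l1_on -big_split; apply: ler_sum => p _ /=.
  have -> : S p.1 p.2 = Sh p.1 p.2 - (Sh - S) p.1 p.2 by rewrite !mxE; ring.
  exact: ler_normB.
have offOm : l1_on (Sh - S) (~: Om) <= l1_on Sh (~: Om) + l1_on S (~: Om).
  by rewrite /l1_on -big_split; apply: ler_sum => p _ /=; rewrite !mxE ler_normB.
lra.
Qed.

(* Tube condition: two measurement vectors within eps of y are within 2 eps
   of each other, and |B(X)|_1 <= |A(X)|_1. *)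
Lemma minimizer_tube S Sh eta eps : l1vec m eta <= eps ->
  resid m a (fun i => mxinner (Amx a i) S + eta i) Sh <= eps ->
  l1B m a (Sh - S) <= 2 * eps.
Proof.
move=> heta hres; pose f j := mxinner (Amx a j) (Sh - S).
pose rr j := (mxinner (Amx a j) S + eta j) - mxinner (Amx a j) Sh.
have f_le j : `|f j| <= `|eta j| + `|rr j|.
  rewrite /f /rr mxinnerBr; set x := mxinner _ Sh; set y := mxinner _ S.
  have -> : x - y = eta j - ((y + eta j) - x) by ring.
  exact: ler_normB.
apply: le_trans (_ : \sum_(i < m) (`|f (2 * i)%N| + `|f (2 * i).+1|) <= _).
  by apply: ler_sum => i _; rewrite /Bmx mxinnerBl ler_normB.
rewrite (sum_pairs m (fun j => `|f j|)).
apply: le_trans (_ : \sum_(j < 2 * m) (`|eta j| + `|rr j|) <= _).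
  by apply: ler_sum => j _; exact: f_le.
by rewrite big_split /=; move: hres heta; rewrite /resid /l1vec; lra.
Qed.

End Minimizer.

Theorem lemma2 (R : rcfType) :
  exists C1 C2 C3 : R -> R -> R,
    (forall g1 g2, 0 < C1 g1 g2 /\ 0 < C2 g1 g2 /\ 0 < C3 g1 g2) /\
    forall (n m : nat) (a : nat -> 'cV[R]_n) (k K2 : nat) (glb gub : R),
      is_gamma_lb m a (k + K2) glb ->
      is_gamma_ub m a K2 gub ->
      forall (Sigma : 'M[R]_n) (Om : {set 'I_n * 'I_n}),
        psd Sigma ->
        best_ksparse_set k Sigma Om ->
      forall (eta : nat -> R) (eps1 : R),
        l1vec m eta <= eps1 ->
      forall (Sigmah : 'M[R]_n),
        is_minimizer m a (fun i => mxinner (Amx a i) Sigma + eta i) eps1 Sigmah ->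
      forall beta2 : R,
        (2 * k < K2)%N ->
        0 < beta2 ->
        beta2 <= (1 - glb) / Num.sqrt 2 - (1 + gub) * Num.sqrt (k%:R / K2%:R) ->
        frob (Sigmah - Sigma) <=
          (C1 glb gub / beta2 + C3 glb gub) * (l1mx (Sigma - restr Om Sigma) / Num.sqrt K2%:R)
          + C2 glb gub / beta2 * (eps1 / m%:R).
Proof.
exists (fun _ g2 => 3 * (`|1 + g2| + 1)), (fun _ _ => 3), (fun _ _ => 2); split.
  by move=> _ g2; have := normr_ge0 (1 + g2); split; [lra | split; lra].
move=> n m a k K2 glb gub [rip_lb _] [rip_ub _] Sigma Om psdS [cardOm _] eta eps1 heta
  Sigmah [[psdSh resSh] minSh] beta2 hkK beta_gt0 beta_le.
have eps0 : 0 <= eps1 := le_trans (l1vec_ge0 m eta) heta.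
apply: (error_bound rip_lb rip_ub hkK beta_gt0 beta_le (Om := Om)).
- exact: symmxB psdSh.1 psdS.1.
- by rewrite cardOm geq_minl.
- by rewrite restrC l1mx_restr l1_on_ge0.
- by rewrite divr_ge0 ?ler0n.
- exact/minimizer_cone/minSh/truth_feasible.
- rewrite mulrA ler_wpM2r ?invr_ge0 ?ler0n //.
  exact: minimizer_tube heta resSh.
Qed.
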